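(* $$\sum_{n=1}^\infty \frac{2^n H_n \binom{2n}{n}}{n\, 3^{2n}} = \frac{\pi^2}{6} - (\log 2)^2.$$
   Context: $H_n=\sum_{k=1}^n \frac{1}{k}$ denotes the $n$-th harmonic number and $\binom{2n}{n}$ the central binomial coefficient; $\log$ is the natural logarithm. *)

From Stdlib Require Import Reals.
From Coquelicot Require Import Coquelicot.
Open Scope R_scope.

Fixpoint harmonic (n : nat) : R :=
  match n with
  | O => 0
  | S m => harmonic m + / INR (S m)
  end.

Definition term9 (n : nat) : R :=
  2 ^ n * harmonic n * Binomial.C (2 * n) n / (INR n * 3 ^ (2 * n)).

From Stdlib Require Import Reals Lra Lia.
From Coquelicot Require Import Coquelicot.
Open Scope R_scope.

(* With [C_n = binom(2n,n)] one has [sum C_n x^n = 1 / sqrt (1 - 4 x)], and the generating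
   functions of [C_n H_n] and [C_n H_n / n] satisfy first-order linear differential equations,
   which the substitution [x = u / (1 + u)^2] solves: [sum_n C_n H_n x^n / n = 2 Li2 u].
   The series of the theorem is the case [x = 2/9], [u = 1/2]. Euler's reflection formula
   [Li2 z + Li2 (1 - z) + ln z ln (1 - z) = zeta(2)] at [z = 1/2] gives
   [2 Li2 (1/2) = zeta(2) - (ln 2)^2]. Finally [zeta(2) = PI^2/6] follows from
   [sum 1/(2n+1)^2 = PI^2/8], obtained by integrating the arcsine series of [t] in powers of
   [sin t] termwise over [[0, PI/2]] against the Wallis integrals. *)

(** * Calculus and power series *)

Lemma is_derive_0_const (f : R -> R) (a b : R) :
  (forall x, a < x < b -> is_derive f x 0) ->
  forall x y, a < x < b -> a < y < b -> f x = f y.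
Proof.
  intros Hd x y Hx Hy.
  assert (Hin : forall z, Rmin x y <= z <= Rmax x y -> a < z < b).
  { intros z [H1 H2]. split.
    - apply Rlt_le_trans with (Rmin x y); [apply Rmin_glb_lt|]; lra.
    - apply Rle_lt_trans with (Rmax x y); [|apply Rmax_lub_lt]; lra. }
  destruct (MVT_gen f x y (fun _ => 0)) as [c [_ Heq]]; [| |lra].
  - intros z Hz. apply Hd, Hin. lra.
  - intros z Hz. apply continuity_pt_filterlim.
    apply (ex_derive_continuous (K := R_AbsRing) (V := R_NormedModule)).
    exists 0. apply Hd, Hin, Hz.
Qed.

Lemma is_derive_Rmult (f g : R -> R) x df dg :
  is_derive f x df -> is_derive g x dg ->
  is_derive (fun t => f t * g t) x (df * g x + f x * dg).
Proof. intros Hf Hg. apply (is_derive_mult f g x df dg Hf Hg), Rmult_comm. Qed.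

Lemma is_derive_Rcomp (f g : R -> R) x df dg :
  is_derive f (g x) df -> is_derive g x dg ->
  is_derive (fun t => f (g t)) x (df * dg).
Proof. intros Hf Hg. rewrite Rmult_comm. apply (is_derive_comp f g x df dg Hf Hg). Qed.

Lemma is_derive_eq_r (f : R -> R) (x d d' : R) :
  is_derive f x d -> d = d' -> is_derive f x d'.
Proof. intros H <-. exact H. Qed.

Lemma CV_radius_inside_unit (b : nat -> R) x :
  (forall n, Rabs (b n) <= 1) -> Rabs x < 1 -> Rbar_lt (Rabs x) (CV_radius b).
Proof.
  intros Hb Hx. apply Rbar_lt_le_trans with 1; [exact Hx|].
  apply CV_radius_bounded. exists 1. intros n. rewrite pow1, Rmult_1_r. apply Hb.
Qed.

(* [(n+1) 4^(n+1)] are the coefficients of the derivative of [sum 4^n x^n]. *)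
Lemma CV_radius_inside_quarter (b : nat -> R) x :
  (forall n, Rabs (b n) <= INR (S n) * 4 ^ S n) -> Rabs x < 1/4 ->
  Rbar_lt (Rabs x) (CV_radius b).
Proof.
  intros Hb Hx. apply Rbar_lt_le_trans with (1/4); [exact Hx|].
  apply Rbar_le_trans with (CV_radius (PS_derive (fun n => 4 ^ n))).
  - rewrite CV_radius_derive. apply CV_radius_bounded. exists 1. intros n.
    rewrite <- Rpow_mult_distr. replace (4 * (1/4)) with 1 by field.
    rewrite pow1, Rabs_R1. lra.
  - apply CV_radius_bounded. intros r [M HM]. apply CV_radius_bounded. exists M.
    intros n. eapply Rle_trans; [|apply (HM n)]. rewrite !Rabs_mult.
    apply Rmult_le_compat_r; [apply Rabs_pos|].
    unfold PS_derive. rewrite (Rabs_right (INR (S n) * _)); [apply Hb|].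
    apply Rle_ge, Rmult_le_pos; [apply pos_INR| apply pow_le; lra].
Qed.

Lemma PSeries_lincomb3 (p q r s : nat -> R) (al be ga x : R) :
  (forall n, p n = al * q n + be * r n + ga * s n) ->
  ex_pseries q x -> ex_pseries r x -> ex_pseries s x ->
  PSeries p x = al * PSeries q x + be * PSeries r x + ga * PSeries s x.
Proof.
  intros H Hq Hr Hs. apply ex_pseries_R in Hq, Hr, Hs.
  unfold PSeries. rewrite <- !Series_scal_l, <- !Series_plus.
  - apply Series_ext. intros n. rewrite H. ring.
  - exact (ex_series_plus _ _ (ex_series_scal_l _ _ Hq) (ex_series_scal_l _ _ Hr)).
  - exact (ex_series_scal_l _ _ Hs).
  - exact (ex_series_scal_l _ _ Hq).
  - exact (ex_series_scal_l _ _ Hr).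
Qed.

Lemma PS_incr_1_derive (b : nat -> R) n : PS_incr_1 (PS_derive b) n = INR n * b n.
Proof. destruct n; simpl; [symmetry; apply Rmult_0_l | reflexivity]. Qed.

Lemma geom_PSeries u : Rabs u < 1 -> PSeries (fun _ => 1) u = / (1 - u).
Proof.
  intros Hu. apply is_series_unique, (is_series_ext (fun n => u ^ n)).
  - intros n. symmetry. apply Rmult_1_l.
  - apply is_series_geom, Hu.
Qed.

Lemma Series_ge_0 (u : nat -> R) : (forall n, 0 <= u n) -> ex_series u -> 0 <= Series u.
Proof.
  intros Hu Hex. apply Rle_trans with (Series (fun n => 0 * u n)).
  - rewrite Series_scal_l. lra.
  - apply Series_le; [|exact Hex]. intros n. rewrite Rmult_0_l. split; [lra|apply Hu].
Qed.

Lemma is_series_partial_sums (u : nat -> R) l : is_series u l <-> is_lim_seq (sum_f_R0 u) l.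
Proof. rewrite is_series_Reals, is_lim_seq_Reals. reflexivity. Qed.

Lemma is_series_partial_le (u : nat -> R) l N :
  (forall n, 0 <= u n) -> is_series u l -> sum_f_R0 u N <= l.
Proof.
  intros Hu Hl. apply sum_incr; [apply is_lim_seq_Reals, is_series_partial_sums|]; assumption.
Qed.

Lemma is_series_tail_le (u v : nat -> R) L M N : is_series u L -> is_series v M ->
  (forall n, 0 <= u n <= v n) -> L - sum_f_R0 u N <= M - sum_f_R0 v N.
Proof.
  intros Hu Hv Huv.
  rewrite <- (is_series_unique _ _ Hu), <- (is_series_unique _ _ Hv).
  rewrite (Series_incr_n u (S N)), (Series_incr_n v (S N)) by (lia || eexists; eassumption).
  simpl pred.
  enough (Series (fun k => u (S N + k)%nat) <= Series (fun k => v (S N + k)%nat)) by lra.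
  apply Series_le; [intros; apply Huv|]. apply (ex_series_incr_n v (S N)). eexists; exact Hv.
Qed.

Lemma ln_le_sub_1 y : 0 < y -> ln y <= y - 1.
Proof. intros Hy. assert (H := exp_ineq1_le (ln y)). rewrite exp_ln in H by exact Hy. lra. Qed.

Lemma eq_of_dist_le_eps x y : (forall e, 0 < e -> Rabs (x - y) <= e) -> x = y.
Proof.
  intros H. destruct (Req_dec x y) as [|Hxy]; [assumption|].
  assert (Hp : 0 < Rabs (x - y)) by (apply Rabs_pos_lt; lra).
  assert (H1 := H (Rabs (x - y) / 2) ltac:(lra)). lra.
Qed.

Lemma pow_1m_ge z N : 0 <= z <= 1 -> 1 - INR N * z <= (1 - z) ^ N.
Proof.
  intros Hz. induction N as [|N IH]; [simpl; lra|].
  rewrite S_INR. simpl. assert (H := pow_le (1 - z) N ltac:(lra)).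
  assert (0 <= INR N) by apply pos_INR. nra.
Qed.

Section NonnegPowerSeries.

Variables (b : nat -> R) (Z : R).
Hypotheses (b_ge0 : forall n, 0 <= b n) (b_series : is_series b Z).

Let weighted_term_bounds w n : 0 <= w <= 1 -> 0 <= b n * w ^ n <= b n.
Proof.
  intros Hw. split; [apply Rmult_le_pos; [apply b_ge0 | apply pow_le; lra]|].
  rewrite <- (Rmult_1_r (b n)) at 2. apply Rmult_le_compat_l; [apply b_ge0|].
  rewrite <- (pow1 n). apply pow_incr. lra.
Qed.

Let ex_series_weighted w : 0 <= w <= 1 -> ex_series (fun n => b n * w ^ n).
Proof.
  intros Hw. apply (ex_series_le (fun n => b n * w ^ n) b); [|eexists; exact b_series].
  intros n. destruct (weighted_term_bounds w n Hw). unfold norm; simpl. rewrite Rabs_right; lra.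
Qed.

Lemma PSeries_le_series w : 0 <= w <= 1 -> PSeries b w <= Z.
Proof.
  intros Hw. rewrite <- (is_series_unique _ _ b_series).
  apply Series_le; [intros n; apply weighted_term_bounds, Hw | eexists; exact b_series].
Qed.

Lemma PSeries_ge_partial w N : 0 <= w <= 1 -> w ^ N * sum_f_R0 b N <= PSeries b w.
Proof.
  intros Hw. unfold PSeries.
  rewrite (Series_incr_n _ (S N)) by (lia || apply ex_series_weighted, Hw). simpl pred.
  assert (0 <= Series (fun k => b (S N + k)%nat * w ^ (S N + k))).
  { apply Series_ge_0; [intros n; apply weighted_term_bounds, Hw|].
    apply (ex_series_incr_n (fun n => b n * w ^ n)), ex_series_weighted, Hw. }
  enough (w ^ N * sum_f_R0 b N <= sum_f_R0 (fun k => b k * w ^ k) N) by lra.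
  rewrite scal_sum. apply sum_Rle. intros k Hk.
  apply Rmult_le_compat_l; [apply b_ge0|].
  replace N with (k + (N - k))%nat at 1 by lia. rewrite pow_add.
  rewrite <- (Rmult_1_r (w ^ k)) at 2. apply Rmult_le_compat_l; [apply pow_le; lra|].
  rewrite <- (pow1 (N - k)). apply pow_incr. lra.
Qed.

Lemma PSeries_ge_partial_sub w N : 0 <= w <= 1 ->
  sum_f_R0 b N - INR N * (1 - w) * Z <= PSeries b w.
Proof.
  intros Hw.
  assert (H1 := PSeries_ge_partial w N Hw).
  assert (H2 := pow_1m_ge (1 - w) N ltac:(lra)). replace (1 - (1 - w)) with w in H2 by ring.
  assert (H3 := is_series_partial_le b Z N b_ge0 b_series).
  assert (H4 : 0 <= sum_f_R0 b N) by (apply cond_pos_sum, b_ge0).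
  assert (H5 := pos_INR N).
  assert (H6 : (1 - INR N * (1 - w)) * sum_f_R0 b N <= w ^ N * sum_f_R0 b N)
    by (apply Rmult_le_compat_r; lra).
  assert (H7 : INR N * (1 - w) * sum_f_R0 b N <= INR N * (1 - w) * Z).
  { apply Rmult_le_compat_l; [apply Rmult_le_pos|]; lra. }
  nra.
Qed.

(* Abel's theorem for nonnegative coefficients, at [w = 1] from the left. *)
Lemma PSeries_near_1 e : 0 < e ->
  exists d, 0 < d /\ forall w, 1 - d < w <= 1 -> Z - e <= PSeries b w <= Z.
Proof.
  intros He.
  destruct (proj1 (is_series_Reals b Z) b_series (e / 2) ltac:(lra)) as [N HN].
  assert (HSN := HN N (le_n N)). unfold Rdist in HSN. apply Rabs_def2 in HSN.
  assert (HNZ : 0 <= INR N * Z).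
  { apply Rmult_le_pos; [apply pos_INR|].
    assert (H := is_series_partial_le b Z N b_ge0 b_series).
    assert (0 <= sum_f_R0 b N) by (apply cond_pos_sum, b_ge0). lra. }
  set (d := Rmin 1 (e / (2 * (INR N * Z + 1)))).
  assert (Hd1 : d <= 1) by apply Rmin_l.
  assert (Hd0 : 0 < d) by (apply Rmin_glb_lt; [lra | apply Rdiv_lt_0_compat; lra]).
  assert (HdNZ : (INR N * Z + 1) * d <= e / 2).
  { apply Rle_trans with ((INR N * Z + 1) * (e / (2 * (INR N * Z + 1)))).
    - apply Rmult_le_compat_l; [lra | apply Rmin_r].
    - right. field. lra. }
  exists d. split; [exact Hd0|]. intros w Hw.
  split; [|apply PSeries_le_series; lra].
  assert (H := PSeries_ge_partial_sub w N ltac:(lra)).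
  assert (INR N * (1 - w) * Z <= INR N * Z * d).
  { rewrite (Rmult_comm (INR N)), Rmult_assoc, (Rmult_comm (INR N * Z)).
    apply Rmult_le_compat_r; lra. }
  nra.
Qed.

End NonnegPowerSeries.

(** * Central binomial coefficients *)

Definition centralC (n : nat) : R := Binomial.C (2 * n) n.

Lemma centralC_0 : centralC 0 = 1.
Proof. unfold centralC, Binomial.C. simpl. field. Qed.

Lemma centralC_gt0 n : 0 < centralC n.
Proof.
  unfold centralC, Binomial.C. apply Rdiv_lt_0_compat.
  - apply INR_fact_lt_0.
  - apply Rmult_lt_0_compat; apply INR_fact_lt_0.
Qed.

Lemma centralC_rec n : INR (S n) * centralC (S n) = (4 * INR n + 2) * centralC n.
Proof.
  unfold centralC, Binomial.C.
  replace (2 * S n - S n)%nat with (S n) by lia.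
  replace (2 * n - n)%nat with n by lia.
  replace (2 * S n)%nat with (S (S (2 * n))) by lia.
  rewrite !fact_simpl, !mult_INR, !S_INR, mult_INR. simpl (INR 2).
  assert (H1 := INR_fact_lt_0 (2 * n)). assert (H2 := INR_fact_lt_0 n).
  assert (H3 := pos_INR n).
  field. lra.
Qed.

Lemma centralC_S n : centralC (S n) = (4 * INR n + 2) / INR (S n) * centralC n.
Proof.
  assert (H : 0 < INR (S n)) by (apply lt_0_INR; lia).
  apply Rmult_eq_reg_l with (INR (S n)); [|lra].
  rewrite centralC_rec. field. lra.
Qed.

Lemma centralC_1 : centralC 1 = 2.
Proof. rewrite centralC_S, centralC_0. simpl. field. Qed.

Lemma centralC_le_pow4 n : centralC n <= 4 ^ n.
Proof.
  induction n as [|n IH]; [rewrite centralC_0; simpl; lra|].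
  assert (H : 0 < INR (S n)) by (apply lt_0_INR; lia).
  assert (Hc := centralC_gt0 n).
  rewrite centralC_S, <- tech_pow_Rmult.
  apply Rle_trans with (4 * centralC n); [|lra].
  apply Rmult_le_compat_r; [lra|].
  apply Rmult_le_reg_r with (INR (S n)); [lra|].
  unfold Rdiv. rewrite Rmult_assoc, Rinv_l, S_INR; lra.
Qed.

Lemma centralC_bound n : Rabs (centralC n) <= INR (S n) * 4 ^ S n.
Proof.
  rewrite Rabs_right by (apply Rle_ge, Rlt_le, centralC_gt0).
  apply Rle_trans with (4 ^ n); [apply centralC_le_pow4|].
  rewrite <- tech_pow_Rmult, S_INR.
  assert (H := pos_INR n). assert (0 < 4 ^ n) by (apply pow_lt; lra). nra.
Qed.

Lemma centralC_gf_ode x : Rabs x < 1/4 ->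
  PSeries (PS_derive centralC) x
  = 4 * x * PSeries (PS_derive centralC) x + 2 * PSeries centralC x.
Proof.
  intros Hx.
  assert (Hr := CV_radius_inside_quarter centralC x centralC_bound Hx).
  rewrite (PSeries_lincomb3 _ (PS_incr_1 (PS_derive centralC)) centralC centralC 4 2 0 x) at 1.
  - rewrite PSeries_incr_1. ring.
  - intros n. rewrite PS_incr_1_derive. unfold PS_derive. rewrite centralC_rec. ring.
  - apply CV_radius_inside. rewrite CV_radius_incr_1, CV_radius_derive. exact Hr.
  - apply CV_radius_inside, Hr.
  - apply CV_radius_inside, Hr.
Qed.

Lemma centralC_gf x : Rabs x < 1/4 -> PSeries centralC x * sqrt (1 - 4 * x) = 1.
Proof.
  intros Hx.
  set (h := fun t => PSeries centralC t * sqrt (1 - 4 * t)).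
  change (h x = 1).
  assert (Hd : forall t, -1/4 < t < 1/4 -> is_derive h t 0).
  { intros t Ht. assert (Htt : Rabs t < 1/4) by (apply Rabs_def1; lra).
    eapply is_derive_eq_r; [apply is_derive_Rmult|].
    - apply is_derive_PSeries, CV_radius_inside_quarter; [apply centralC_bound|exact Htt].
    - apply (is_derive_sqrt (fun t => 1 - 4 * t) t (-4)); [auto_derive; auto; ring|lra].
    - assert (Hs : 0 < sqrt (1 - 4 * t)) by (apply sqrt_lt_R0; lra).
      assert (Hss := sqrt_sqrt (1 - 4 * t) ltac:(lra)).
      assert (Hode := centralC_gf_ode t Htt).
      set (s := sqrt (1 - 4 * t)) in *.
      replace (PSeries (PS_derive centralC) t * s + PSeries centralC t * (-4 / (2 * s)))
        with ((PSeries (PS_derive centralC) t * (s * s) - 2 * PSeries centralC t) / s)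
        by (field; lra).
      rewrite Hss. replace (_ * (1 - 4 * t) - _) with 0 by lra. apply Rmult_0_l. }
  rewrite (is_derive_0_const h (-1/4) (1/4) Hd x 0).
  - unfold h. rewrite PSeries_0, centralC_0, Rmult_0_r, Rminus_0_r, sqrt_1. ring.
  - apply Rabs_def2 in Hx. lra.
  - lra.
Qed.

(** * Generating functions of [C(2n,n) H_n] and [C(2n,n) H_n / n] *)

Lemma harmonic_ge0 n : 0 <= harmonic n.
Proof.
  induction n as [|n IH]; [simpl; lra|].
  change (harmonic (S n)) with (harmonic n + / INR (S n)).
  assert (0 < / INR (S n)) by (apply Rinv_0_lt_compat, lt_0_INR; lia). lra.
Qed.

Lemma harmonic_le n : harmonic n <= INR n.
Proof.
  induction n as [|n IH]; [simpl; lra|].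
  change (harmonic (S n)) with (harmonic n + / INR (S n)).
  assert (H1 : 1 <= INR (S n)) by (apply (le_INR 1); lia).
  assert (/ INR (S n) <= 1) by (rewrite <- Rinv_1; apply Rinv_le_contravar; lra).
  assert (H2 := S_INR n). lra.
Qed.

Definition binomH (n : nat) : R := centralC n * harmonic n.
Definition binomH_div (n : nat) : R := binomH n / INR n.

Lemma binomH_0 : binomH 0 = 0.
Proof. unfold binomH. simpl. ring. Qed.

Lemma binomH_div_0 : binomH_div 0 = 0.
Proof. unfold binomH_div. rewrite binomH_0. unfold Rdiv. ring. Qed.

Lemma binomH_bound n : Rabs (binomH n) <= INR (S n) * 4 ^ S n.
Proof.
  assert (H1 := centralC_le_pow4 n). assert (H2 := harmonic_le n).
  assert (H3 := harmonic_ge0 n). assert (H4 := centralC_gt0 n).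
  assert (H5 := pos_INR n). assert (0 < 4 ^ n) by (apply pow_lt; lra).
  unfold binomH. rewrite Rabs_right by (apply Rle_ge, Rmult_le_pos; lra).
  rewrite <- tech_pow_Rmult, S_INR.
  apply Rle_trans with (4 ^ n * INR n); [apply Rmult_le_compat; lra | nra].
Qed.

Lemma binomH_div_bound n : Rabs (binomH_div n) <= INR (S n) * 4 ^ S n.
Proof.
  destruct n as [|n].
  { rewrite binomH_div_0, Rabs_R0. simpl. lra. }
  assert (HS : 0 < INR (S n)) by (apply lt_0_INR; lia).
  assert (H1 := centralC_le_pow4 (S n)). assert (H2 := harmonic_le (S n)).
  assert (H3 := harmonic_ge0 (S n)). assert (H4 := centralC_gt0 (S n)).
  assert (Hh : 0 <= harmonic (S n) / INR (S n) <= 1).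
  { split; [apply Rdiv_le_0_compat; lra|].
    apply Rmult_le_reg_r with (INR (S n)); [lra|].
    unfold Rdiv. rewrite Rmult_assoc, Rinv_l; lra. }
  assert (1 <= INR (S (S n))) by (apply (le_INR 1); lia).
  assert (0 < 4 ^ S n) by (apply pow_lt; lra).
  unfold binomH_div, binomH. unfold Rdiv. rewrite Rmult_assoc.
  rewrite Rabs_right by (apply Rle_ge, Rmult_le_pos; lra).
  apply Rle_trans with (4 ^ S n * 1); [apply Rmult_le_compat; lra|].
  rewrite <- (tech_pow_Rmult 4 (S n)). nra.
Qed.

Lemma centralC_decr_bound n : Rabs (PS_decr_1 centralC n) <= INR (S n) * 4 ^ S n.
Proof.
  unfold PS_decr_1. rewrite Rabs_right by (apply Rle_ge, Rlt_le, centralC_gt0).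
  assert (1 <= INR (S n)) by (apply (le_INR 1); lia).
  assert (0 < 4 ^ S n) by (apply pow_lt; lra).
  assert (Hc := centralC_le_pow4 (S n)). nra.
Qed.

(* From [(n+1) H_(n+1) = (n+1) H_n + 1]: the recurrence of [centralC] plus one extra term. *)
Lemma binomH_gf_ode x : Rabs x < 1/4 ->
  PSeries (PS_derive binomH) x
  = 4 * x * PSeries (PS_derive binomH) x + 2 * PSeries binomH x
    + PSeries (PS_decr_1 centralC) x.
Proof.
  intros Hx.
  assert (Hr := CV_radius_inside_quarter binomH x binomH_bound Hx).
  rewrite (PSeries_lincomb3 _ (PS_incr_1 (PS_derive binomH)) binomH (PS_decr_1 centralC)
             4 2 1 x) at 1.
  - rewrite PSeries_incr_1. ring.
  - intros n. rewrite PS_incr_1_derive. unfold PS_derive, PS_decr_1, binomH.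
    assert (HS : 0 < INR (S n)) by (apply lt_0_INR; lia).
    change (harmonic (S n)) with (harmonic n + / INR (S n)).
    replace (INR (S n) * (centralC (S n) * (harmonic n + / INR (S n))))
      with (INR (S n) * centralC (S n) * harmonic n + centralC (S n)) by (field; lra).
    rewrite centralC_rec. ring.
  - apply CV_radius_inside. rewrite CV_radius_incr_1, CV_radius_derive. exact Hr.
  - apply CV_radius_inside, Hr.
  - apply CV_radius_inside, CV_radius_inside_quarter; [apply centralC_decr_bound|exact Hx].
Qed.

(* The substitution [x = u / (1 + u)^2] makes [sqrt (1 - 4 x) = (1 - u) / (1 + u)] rational. *)
Definition xsub (u : R) : R := u / (1 + u) ^ 2.

Lemma xsub_abs_lt u : -1/10 < u < 1 -> Rabs (xsub u) < 1/4.
Proof.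
  intros Hu. unfold xsub. assert (Hp : 0 < (1 + u) ^ 2) by (apply pow_lt; lra).
  apply Rabs_def1; apply Rmult_lt_reg_r with ((1 + u) ^ 2); try lra;
    unfold Rdiv; rewrite Rmult_assoc, Rinv_l by lra; nra.
Qed.

Lemma is_derive_xsub u : -1/10 < u < 1 -> is_derive xsub u ((1 - u) / (1 + u) ^ 3).
Proof. intros Hu. unfold xsub. auto_derive; [apply Rgt_not_eq; nra | field; lra]. Qed.

Lemma xsub_0 : xsub 0 = 0.
Proof. unfold xsub. field. Qed.

Lemma centralC_gf_xsub u : -1/10 < u < 1 -> PSeries centralC (xsub u) = (1 + u) / (1 - u).
Proof.
  intros Hu. assert (H := centralC_gf (xsub u) (xsub_abs_lt u Hu)).
  replace (sqrt (1 - 4 * xsub u)) with ((1 - u) / (1 + u)) in H.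
  - apply Rmult_eq_reg_r with ((1 - u) / (1 + u)).
    + rewrite H. field. lra.
    + apply Rgt_not_eq, Rdiv_lt_0_compat; lra.
  - replace (1 - 4 * xsub u) with (((1 - u) / (1 + u)) ^ 2).
    + symmetry. apply sqrt_pow2, Rlt_le, Rdiv_lt_0_compat; lra.
    + unfold xsub. field. lra.
Qed.

Lemma centralC_decr_gf_xsub u : -1/10 < u < 1 ->
  PSeries (PS_decr_1 centralC) (xsub u) = 2 * (1 + u) ^ 2 / (1 - u).
Proof.
  intros Hu. destruct (Req_dec u 0) as [->|Hu0].
  { rewrite xsub_0, PSeries_0. unfold PS_decr_1. rewrite centralC_1. field. }
  assert (H := centralC_gf_xsub u Hu).
  rewrite PSeries_decr_1, centralC_0 in H
    by (apply CV_radius_inside, CV_radius_inside_quarter;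
        [apply centralC_bound | apply xsub_abs_lt, Hu]).
  unfold xsub in *.
  apply Rmult_eq_reg_l with (u / (1 + u) ^ 2).
  - replace (u / (1 + u) ^ 2 * (2 * (1 + u) ^ 2 / (1 - u))) with ((1 + u) / (1 - u) - 1)
      by (field; lra).
    rewrite <- H. ring.
  - apply Rmult_integral_contrapositive. split; [exact Hu0|].
    apply Rinv_neq_0_compat, pow_nonzero. lra.
Qed.

(** * The dilogarithm *)

Definition log_coef (n : nat) : R := match n with 0%nat => 0 | S m => / INR (S m) end.
Definition dilog_coef (n : nat) : R := match n with 0%nat => 0 | S m => / INR (S m) ^ 2 end.
Definition Li2 (z : R) : R := PSeries dilog_coef z.

Lemma inv_INR_S_bound n : 0 < / INR (S n) <= 1.
Proof.
  assert (H : 1 <= INR (S n)) by (apply (le_INR 1); lia).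
  split; [apply Rinv_0_lt_compat; lra|]. rewrite <- Rinv_1. apply Rinv_le_contravar; lra.
Qed.

Lemma log_coef_bound n : Rabs (log_coef n) <= 1.
Proof.
  destruct n as [|n]; cbn [log_coef]; [rewrite Rabs_R0; lra|].
  destruct (inv_INR_S_bound n). rewrite Rabs_right; lra.
Qed.

Lemma dilog_coef_ge0 n : 0 <= dilog_coef n.
Proof.
  destruct n as [|n]; cbn [dilog_coef]; [lra|].
  apply Rlt_le, Rinv_0_lt_compat, pow_lt, lt_0_INR. lia.
Qed.

Lemma dilog_coef_le1 n : dilog_coef n <= 1.
Proof.
  destruct n as [|n]; cbn [dilog_coef]; [lra|].
  rewrite <- pow_inv. destruct (inv_INR_S_bound n). rewrite <- (pow1 2). apply pow_incr. lra.
Qed.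

Lemma PS_derive_log_coef n : PS_derive log_coef n = 1.
Proof.
  unfold PS_derive. cbn [log_coef]. apply Rinv_r, not_0_INR. lia.
Qed.

Lemma PS_derive_dilog_coef n : PS_derive dilog_coef n = PS_decr_1 log_coef n.
Proof.
  unfold PS_derive, PS_decr_1. cbn [log_coef]. cbn [dilog_coef].
  assert (H : 0 < INR (S n)) by (apply lt_0_INR; lia). field. lra.
Qed.

Lemma PSeries_log_coef u : Rabs u < 1 -> PSeries log_coef u = - ln (1 - u).
Proof.
  intros Hu.
  set (h := fun t => PSeries log_coef t + ln (1 - t)).
  assert (Hd : forall t, -1 < t < 1 -> is_derive h t 0).
  { intros t Ht. assert (Htt : Rabs t < 1) by (apply Rabs_def1; lra).
    eapply is_derive_eq_r; [apply (is_derive_plus (PSeries log_coef) (fun t => ln (1 - t)))|].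
    - apply is_derive_PSeries, CV_radius_inside_unit; [apply log_coef_bound|exact Htt].
    - apply (is_derive_Rcomp ln (fun t => 1 - t) t (/ (1 - t)) (-1)).
      + apply is_derive_ln. lra.
      + auto_derive; auto; ring.
    - rewrite (PSeries_ext _ (fun _ => 1)) by apply PS_derive_log_coef.
      rewrite geom_PSeries by exact Htt. change (plus ?a ?b) with (a + b). field. lra. }
  apply Rabs_def2 in Hu.
  assert (E := is_derive_0_const h (-1) 1 Hd u 0 ltac:(lra) ltac:(lra)).
  unfold h in E. rewrite PSeries_0, Rminus_0_r, ln_1 in E. cbn [log_coef] in E. lra.
Qed.

Lemma is_derive_Li2 z : Rabs z < 1 -> is_derive Li2 z (PSeries (PS_decr_1 log_coef) z).
Proof.
  intros Hz. rewrite <- (PSeries_ext _ _ z PS_derive_dilog_coef).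
  apply is_derive_PSeries, CV_radius_inside_unit; [|exact Hz].
  intros n. rewrite Rabs_right by (apply Rle_ge, dilog_coef_ge0). apply dilog_coef_le1.
Qed.

Lemma z_derive_Li2 z : Rabs z < 1 -> z * PSeries (PS_decr_1 log_coef) z = - ln (1 - z).
Proof.
  intros Hz. rewrite <- PSeries_decr_1_aux by reflexivity. apply PSeries_log_coef, Hz.
Qed.

Lemma binomH_gf_ode_xsub t : -1/10 < t < 1 ->
  PSeries (PS_derive binomH) (xsub t) * (1 - t) ^ 2
  = (2 * PSeries binomH (xsub t) + 2 * (1 + t) ^ 2 / (1 - t)) * (1 + t) ^ 2.
Proof.
  intros Ht. assert (Hode := binomH_gf_ode (xsub t) (xsub_abs_lt t Ht)).
  rewrite (centralC_decr_gf_xsub t Ht) in Hode. unfold xsub in *.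
  set (D := PSeries (PS_derive binomH) (t / (1 + t) ^ 2)) in *.
  assert (Hp : (1 + t) ^ 2 <> 0) by (apply pow_nonzero; lra).
  replace (D * (1 - t) ^ 2) with ((D - 4 * (t / (1 + t) ^ 2) * D) * (1 + t) ^ 2)
    by (field; lra).
  rewrite Hode at 1. ring.
Qed.

Lemma binomH_gf_xsub u : -1/10 < u < 1 ->
  PSeries binomH (xsub u) = - 2 * ln (1 - u) * (1 + u) / (1 - u).
Proof.
  intros Hu.
  set (h := fun t => PSeries binomH (xsub t) * ((1 - t) / (1 + t)) + 2 * ln (1 - t)).
  assert (Hd : forall t, -1/10 < t < 1 -> is_derive h t 0).
  { intros t Ht.
    eapply is_derive_eq_r; [apply (is_derive_plus (fun t => PSeries binomH (xsub t) * _)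
                                                    (fun t => 2 * ln (1 - t)))|].
    - apply is_derive_Rmult; [apply is_derive_Rcomp|].
      + apply is_derive_PSeries, CV_radius_inside_quarter;
          [apply binomH_bound | apply xsub_abs_lt, Ht].
      + apply is_derive_xsub, Ht.
      + auto_derive; [lra|reflexivity].
    - auto_derive; [lra|reflexivity].
    - assert (E := binomH_gf_ode_xsub t Ht). unfold xsub in *.
      set (D := PSeries (PS_derive binomH) (t / (1 + t) ^ 2)) in *.
      set (G := PSeries binomH (t / (1 + t) ^ 2)) in *.
      change (plus ?a ?b) with (a + b).
      match goal with |- ?L = 0 =>
        replace L with ((D * (1 - t) ^ 2 - 2 * G * (1 + t) ^ 2) / (1 + t) ^ 4 - 2 / (1 - t))
          by (field; lra) end.
      rewrite E. field. lra. }
  assert (E := is_derive_0_const h (-1/10) 1 Hd u 0 ltac:(lra) ltac:(lra)).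
  unfold h in E. rewrite xsub_0, PSeries_0, binomH_0, Rminus_0_r, ln_1 in E.
  apply Rmult_eq_reg_r with ((1 - u) / (1 + u)); [|apply Rgt_not_eq, Rdiv_lt_0_compat; lra].
  replace (- 2 * ln (1 - u) * (1 + u) / (1 - u) * ((1 - u) / (1 + u))) with (- 2 * ln (1 - u))
    by (field; lra).
  lra.
Qed.

Lemma binomH_div_derive_xsub t : -1/10 < t < 1 ->
  PSeries (PS_decr_1 binomH) (xsub t) * ((1 - t) / (1 + t) ^ 3)
  = 2 * PSeries (PS_decr_1 log_coef) t.
Proof.
  intros Ht. destruct (Req_dec t 0) as [->|Ht0].
  { rewrite xsub_0, !PSeries_0. unfold PS_decr_1, binomH. cbn [log_coef].
    rewrite centralC_1. simpl. field. }
  assert (E1 := binomH_gf_xsub t Ht).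
  rewrite (PSeries_decr_1_aux binomH _ binomH_0) in E1.
  assert (E2 := z_derive_Li2 t ltac:(apply Rabs_def1; lra)).
  set (D := PSeries (PS_decr_1 binomH) (xsub t)) in *.
  set (L := PSeries (PS_decr_1 log_coef) t) in *.
  unfold xsub in E1.
  apply Rmult_eq_reg_l with t; [|exact Ht0].
  replace (t * (D * ((1 - t) / (1 + t) ^ 3)))
    with ((t / (1 + t) ^ 2 * D) * (1 - t) / (1 + t)) by (field; lra).
  replace (t * (2 * L)) with (2 * (t * L)) by ring.
  rewrite E1, E2. field. lra.
Qed.

Lemma binomH_div_gf_xsub u : -1/10 < u < 1 -> PSeries binomH_div (xsub u) = 2 * Li2 u.
Proof.
  intros Hu.
  set (h := fun t => PSeries binomH_div (xsub t) - 2 * Li2 t).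
  assert (Hder : forall n, PS_derive binomH_div n = PS_decr_1 binomH n).
  { intros n. unfold PS_derive, PS_decr_1, binomH_div.
    assert (0 < INR (S n)) by (apply lt_0_INR; lia). field. lra. }
  assert (Hd : forall t, -1/10 < t < 1 -> is_derive h t 0).
  { intros t Ht.
    eapply is_derive_eq_r; [apply (is_derive_minus (fun t => PSeries binomH_div (xsub t))
                                                     (fun t => 2 * Li2 t))|].
    - apply is_derive_Rcomp; [|apply is_derive_xsub, Ht].
      apply is_derive_PSeries, CV_radius_inside_quarter;
        [apply binomH_div_bound | apply xsub_abs_lt, Ht].
    - apply (is_derive_scal Li2), is_derive_Li2. apply Rabs_def1; lra.
    - rewrite (PSeries_ext _ _ _ Hder), binomH_div_derive_xsub by exact Ht.
      change (minus ?a ?b) with (a - b). ring. }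
  assert (E := is_derive_0_const h (-1/10) 1 Hd u 0 ltac:(lra) ltac:(lra)).
  unfold h, Li2 in E. rewrite xsub_0, !PSeries_0, binomH_div_0 in E. cbn [dilog_coef] in E.
  unfold Li2. lra.
Qed.

Lemma term9_pseries n : binomH_div n * (2/9) ^ n = term9 n.
Proof.
  destruct n as [|n].
  { unfold term9. rewrite binomH_div_0. simpl. unfold Rdiv. ring. }
  unfold term9, binomH_div, binomH, centralC.
  assert (0 < INR (S n)) by (apply lt_0_INR; lia).
  assert (9 ^ S n <> 0) by (apply pow_nonzero; lra).
  rewrite pow_mult. replace (3 ^ 2) with 9 by ring.
  change (2/9) with (2 * / 9). rewrite Rpow_mult_distr, pow_inv.
  field. lra.
Qed.

(* [2/9 = xsub (1/2)]. *)
Lemma is_series_term9_Li2 : is_series (fun n => term9 (S n)) (2 * Li2 (1/2)).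
Proof.
  replace (2 * Li2 (1/2)) with (PSeries binomH_div (2/9)).
  2: { replace (2/9) with (xsub (1/2)) by (unfold xsub; field). apply binomH_div_gf_xsub. lra. }
  apply is_series_incr_1.
  rewrite <- term9_pseries, binomH_div_0, Rmult_0_l.
  change (plus ?a 0) with (a + 0). rewrite Rplus_0_r.
  apply (is_series_ext (fun n => binomH_div n * (2/9) ^ n)); [apply term9_pseries|].
  apply is_pseries_R, PSeries_correct, CV_radius_inside, CV_radius_inside_quarter;
    [apply binomH_div_bound | rewrite Rabs_right; lra].
Qed.

(** * Euler's reflection formula *)

Lemma Li2_reflection z : 0 < z < 1 ->
  Li2 z + Li2 (1 - z) + ln z * ln (1 - z) = 2 * Li2 (1/2) + ln 2 ^ 2.
Proof.
  intros Hz.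
  set (h := fun t => Li2 t + Li2 (1 - t) + ln t * ln (1 - t)).
  assert (HLi2 : forall t, 0 < t < 1 -> is_derive Li2 t (- ln (1 - t) / t)).
  { intros t Ht. assert (Htt : Rabs t < 1) by (apply Rabs_def1; lra).
    eapply is_derive_eq_r; [apply is_derive_Li2, Htt|].
    rewrite <- (z_derive_Li2 t Htt). field. lra. }
  assert (Hd : forall t, 0 < t < 1 -> is_derive h t 0).
  { intros t Ht. eapply is_derive_eq_r.
    - apply (is_derive_plus (fun t => Li2 t + Li2 (1 - t)) (fun t => ln t * ln (1 - t)));
        [apply (is_derive_plus Li2 (fun t => Li2 (1 - t)))|].
      + apply HLi2, Ht.
      + apply (is_derive_Rcomp Li2 (fun t => 1 - t)); [apply HLi2; lra|].
        auto_derive; auto.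
      + apply is_derive_Rmult; [apply is_derive_ln; lra|].
        apply (is_derive_Rcomp ln (fun t => 1 - t)); [apply is_derive_ln; lra|].
        auto_derive; auto.
    - repeat change (plus ?a ?b) with (a + b).
      replace (1 - (1 - t)) with t by ring. field. lra. }
  change (h z = 2 * Li2 (1/2) + ln 2 ^ 2).
  rewrite (is_derive_0_const h 0 1 Hd z (1/2) Hz ltac:(lra)). unfold h.
  replace (1 - 1/2) with (/ 2) by field. replace (1/2) with (/ 2) by field.
  rewrite ln_Rinv by lra. ring.
Qed.

Lemma Li2_bound_small z : 0 <= z <= 1/2 -> 0 <= Li2 z <= 2 * z.
Proof.
  intros Hz. assert (Hz1 : Rabs z < 1) by (apply Rabs_def1; lra).
  assert (Hb : forall n, 0 <= PS_decr_1 dilog_coef n * z ^ n <= 1 * z ^ n).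
  { intros n. assert (0 <= z ^ n) by (apply pow_le; lra).
    assert (H1 := dilog_coef_ge0 (S n)). assert (H2 := dilog_coef_le1 (S n)).
    unfold PS_decr_1. split; [|apply Rmult_le_compat_r]; nra. }
  assert (Hgeom : ex_series (fun n => 1 * z ^ n)).
  { apply (ex_series_ext (fun n => z ^ n)); [intros n; symmetry; apply Rmult_1_l|].
    apply ex_series_geom, Hz1. }
  assert (H1 : PSeries (PS_decr_1 dilog_coef) z <= / (1 - z)).
  { rewrite <- geom_PSeries by exact Hz1. apply Series_le; assumption. }
  assert (H0 : 0 <= PSeries (PS_decr_1 dilog_coef) z).
  { apply Series_ge_0; [apply Hb|].
    apply (ex_series_le (fun n => PS_decr_1 dilog_coef n * z ^ n) (fun n => 1 * z ^ n));
      [|exact Hgeom].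
    intros n. unfold norm; simpl. destruct (Hb n). rewrite Rabs_right; lra. }
  assert (H2 : / (1 - z) <= 2).
  { apply Rmult_le_reg_r with (1 - z); [lra|]. rewrite Rinv_l; lra. }
  unfold Li2. rewrite (PSeries_decr_1_aux dilog_coef z) by reflexivity. nra.
Qed.

Lemma ln_mul_ln_1m_bound z : 0 < z <= 1/2 -> Rabs (ln z * ln (1 - z)) <= 4 * sqrt z.
Proof.
  intros Hz.
  assert (Hs : 0 < sqrt z) by (apply sqrt_lt_R0; lra).
  assert (Hss := sqrt_sqrt z ltac:(lra)).
  assert (Hinv : forall y, 0 < y <= 1 -> 0 <= - ln y <= / y - 1).
  { intros y Hy. assert (1 <= / y) by (rewrite <- Rinv_1; apply Rinv_le_contravar; lra).
    rewrite <- ln_Rinv by lra. split.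
    - rewrite <- ln_1. apply ln_le; lra.
    - apply ln_le_sub_1. lra. }
  assert (Hlnz : 0 <= - ln z <= 2 / sqrt z).
  { replace (- ln z) with (2 * - ln (sqrt z)) by (rewrite <- Hss at 2; rewrite ln_mult; lra).
    assert (sqrt z <= 1) by (rewrite <- sqrt_1; apply sqrt_le_1_alt; lra).
    destruct (Hinv (sqrt z)) as [H1 H2]; [lra|].
    unfold Rdiv. split; [lra|]. nra. }
  assert (Hln1m : 0 <= - ln (1 - z) <= 2 * z).
  { destruct (Hinv (1 - z)) as [H1 H2]; [lra|]. split; [lra|].
    apply Rle_trans with (/ (1 - z) - 1); [exact H2|].
    apply Rle_minus_l, Rmult_le_reg_r with (1 - z); [lra|]. rewrite Rinv_l; nra. }
  replace (ln z * ln (1 - z)) with ((- ln z) * (- ln (1 - z))) by ring.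
  rewrite Rabs_right by (apply Rle_ge, Rmult_le_pos; lra).
  apply Rle_trans with ((2 / sqrt z) * (2 * z)); [apply Rmult_le_compat; lra|].
  rewrite <- Hss at 2. right. field. lra.
Qed.

(* Let [z -> 0] in the reflection formula. *)
Lemma Li2_half Z : is_series dilog_coef Z -> 2 * Li2 (1/2) + ln 2 ^ 2 = Z.
Proof.
  intros HZ. apply eq_of_dist_le_eps. intros e He.
  destruct (PSeries_near_1 dilog_coef Z dilog_coef_ge0 HZ (e / 3) ltac:(lra)) as [d [Hd Hnear]].
  set (s := Rmin (1/2) (Rmin (e / 6) (d / 2))).
  assert (Hs : 0 < s /\ s <= 1/2 /\ s <= e / 6 /\ s <= d / 2).
  { unfold s. assert (H1 := Rmin_l (e / 6) (d / 2)). assert (H2 := Rmin_r (e / 6) (d / 2)).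
    assert (H3 := Rmin_l (1/2) (Rmin (e / 6) (d / 2))).
    assert (H4 := Rmin_r (1/2) (Rmin (e / 6) (d / 2))).
    repeat split; try lra. repeat apply Rmin_glb_lt; lra. }
  set (z := s * s).
  assert (Hz : 0 < z <= s) by (unfold z; split; nra).
  rewrite <- (Li2_reflection z) by lra.
  destruct (Li2_bound_small z ltac:(lra)) as [A1 A2].
  destruct (Hnear (1 - z) ltac:(lra)) as [B1 B2]. fold (Li2 (1 - z)) in B1, B2.
  assert (C := ln_mul_ln_1m_bound z ltac:(lra)).
  replace (sqrt z) with s in C by (unfold z; symmetry; apply sqrt_square; lra).
  assert (C1 := Rle_abs (ln z * ln (1 - z))). assert (C2 := Rabs_maj2 (ln z * ln (1 - z))).
  apply Rabs_le. lra.
Qed.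

(** * The Basel problem *)

(* Integration by parts, as the derivative of [- cos t sin^(m+1) t] is
   [(m + 2) sin^(m+2) t - (m + 1) sin^m t]. *)
Lemma is_RInt_sin_pow_SS m I : is_RInt (fun t => sin t ^ m) 0 (PI / 2) I ->
  is_RInt (fun t => sin t ^ S (S m)) 0 (PI / 2) ((INR m + 1) / (INR m + 2) * I).
Proof.
  intros HI. assert (Hm := pos_INR m).
  set (df := fun t => (INR m + 2) * sin t ^ S (S m) - (INR m + 1) * sin t ^ m).
  set (F := fun t => - cos t * sin t ^ S m).
  assert (HF : is_RInt df 0 (PI / 2) (F (PI / 2) - F 0)).
  { apply (is_RInt_derive F df).
    - intros x _. unfold F, df. auto_derive; auto.
      change (match m with 0%nat => 1 | S _ => INR m + 1 end) with (INR (S m)).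
      rewrite S_INR, <- !tech_pow_Rmult.
      assert (Hc : cos x * cos x = 1 - sin x * sin x)
        by (assert (H := sin2_cos2 x); unfold Rsqr in H; lra).
      replace (- cos x * (1 * cos x * ((INR m + 1) * sin x ^ m)))
        with (- (cos x * cos x) * ((INR m + 1) * sin x ^ m)) by ring.
      rewrite Hc. ring.
    - intros x _. apply (ex_derive_continuous (K := R_AbsRing) (V := R_NormedModule)).
      unfold df. auto_derive; auto. }
  replace (F (PI / 2) - F 0) with 0 in HF by (unfold F; rewrite cos_PI2, sin_0; simpl; ring).
  apply (is_RInt_ext (fun t => / (INR m + 2) * (df t + (INR m + 1) * sin t ^ m))).
  { intros x _. unfold df. match goal with |- ?a = ?b => change (@eq R a b) end. field. lra. }
  replace ((INR m + 1) / (INR m + 2) * I) with (/ (INR m + 2) * (0 + (INR m + 1) * I))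
    by (field; lra).
  exact (is_RInt_scal _ _ _ _ _ (is_RInt_plus _ _ _ _ _ _ HF (is_RInt_scal _ _ _ _ _ HI))).
Qed.

Lemma is_RInt_sin_odd_pow n :
  is_RInt (fun t => sin t ^ (2 * n + 1)) 0 (PI / 2) (4 ^ n / ((2 * INR n + 1) * centralC n)).
Proof.
  induction n as [|n IH].
  { rewrite centralC_0. simpl.
    replace (1 / ((2 * 0 + 1) * 1)) with (- cos (PI / 2) - - cos 0)
      by (rewrite cos_PI2, cos_0; field).
    apply (is_RInt_ext sin); [intros; simpl; ring|].
    apply (is_RInt_derive (fun t => - cos t)).
    - intros x _. auto_derive; auto. ring.
    - intros x _. apply continuity_pt_filterlim, continuity_sin. }
  replace (2 * S n + 1)%nat with (S (S (2 * n + 1))) by lia.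
  replace (4 ^ S n / ((2 * INR (S n) + 1) * centralC (S n)))
    with ((INR (2 * n + 1) + 1) / (INR (2 * n + 1) + 2)
          * (4 ^ n / ((2 * INR n + 1) * centralC n))).
  - apply is_RInt_sin_pow_SS, IH.
  - assert (Hn := pos_INR n). assert (Hc := centralC_gt0 n).
    rewrite centralC_S, plus_INR, mult_INR, !S_INR, <- tech_pow_Rmult. simpl INR.
    field. repeat split; lra.
Qed.

Definition arcsin_coef (n : nat) : R := centralC n / (4 ^ n * (2 * INR n + 1)).

Lemma arcsin_coef_gt0 n : 0 < arcsin_coef n.
Proof.
  unfold arcsin_coef. apply Rdiv_lt_0_compat; [apply centralC_gt0|].
  assert (H := pos_INR n). apply Rmult_lt_0_compat; [apply pow_lt|]; lra.
Qed.

Lemma arcsin_coef_bound n : Rabs (arcsin_coef n) <= 1.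
Proof.
  rewrite Rabs_right by (apply Rle_ge, Rlt_le, arcsin_coef_gt0).
  assert (H1 := centralC_le_pow4 n). assert (H2 := pos_INR n).
  assert (H3 : 0 < 4 ^ n) by (apply pow_lt; lra).
  unfold arcsin_coef. apply Rmult_le_reg_r with (4 ^ n * (2 * INR n + 1)); [nra|].
  unfold Rdiv. rewrite Rmult_assoc, Rinv_l by nra. nra.
Qed.

Lemma arcsin_coef_ode w : Rabs w < 1 ->
  PSeries arcsin_coef w + 2 * w * PSeries (PS_derive arcsin_coef) w
  = PSeries centralC (w / 4).
Proof.
  intros Hw.
  assert (Hr := CV_radius_inside_unit _ _ arcsin_coef_bound Hw).
  transitivity (PSeries (fun n => centralC n / 4 ^ n) w).
  - rewrite (PSeries_lincomb3 (fun n => centralC n / 4 ^ n) arcsin_coef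
               (PS_incr_1 (PS_derive arcsin_coef)) arcsin_coef 1 2 0 w).
    + rewrite PSeries_incr_1. ring.
    + intros n. rewrite PS_incr_1_derive. unfold arcsin_coef.
      assert (0 < 4 ^ n) by (apply pow_lt; lra). assert (Hn := pos_INR n). field. lra.
    + apply CV_radius_inside, Hr.
    + apply CV_radius_inside. rewrite CV_radius_incr_1, CV_radius_derive. exact Hr.
    + apply CV_radius_inside, Hr.
  - apply Series_ext. intros n. unfold Rdiv. rewrite Rpow_mult_distr, pow_inv. ring.
Qed.

Lemma arcsin_series t : - (PI / 2) < t < PI / 2 -> sin t * PSeries arcsin_coef (sin t ^ 2) = t.
Proof.
  intros Ht.
  set (h := fun t => sin t * PSeries arcsin_coef (sin t ^ 2) - t).
  assert (Hd : forall t, - (PI / 2) < t < PI / 2 -> is_derive h t 0).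
  { intros x Hx.
    assert (Hc : 0 < cos x) by (apply cos_gt_0; lra).
    assert (Hsc := sin2_cos2 x). unfold Rsqr in Hsc.
    assert (Hw : Rabs (sin x ^ 2) < 1) by (rewrite Rabs_right; nra).
    eapply is_derive_eq_r.
    - apply (is_derive_minus (fun t => sin t * PSeries arcsin_coef (sin t ^ 2)) (fun t => t)).
      + apply is_derive_Rmult; [apply is_derive_sin|].
        apply (is_derive_Rcomp (PSeries arcsin_coef) (fun t => sin t ^ 2)).
        * apply is_derive_PSeries, CV_radius_inside_unit; [apply arcsin_coef_bound|exact Hw].
        * instantiate (1 := 2 * sin x * cos x). auto_derive; auto. ring.
      + apply (is_derive_id (K := R_AbsRing)).
    - assert (Hgf := centralC_gf (sin x ^ 2 / 4) ltac:(rewrite Rabs_right; nra)).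
      rewrite <- arcsin_coef_ode in Hgf by exact Hw.
      replace (1 - 4 * (sin x ^ 2 / 4)) with (cos x ^ 2) in Hgf by (simpl; lra).
      rewrite sqrt_pow2 in Hgf by lra.
      change (minus ?a ?b) with (a - b). change (@one R_AbsRing) with 1.
      rewrite <- Hgf. ring. }
  assert (E := is_derive_0_const h (- (PI / 2)) (PI / 2) Hd t 0 Ht
                 ltac:(assert (H := PI_RGT_0); lra)).
  unfold h in E. rewrite sin_0 in E. lra.
Qed.

Definition arcsin_term (t : R) (n : nat) : R := arcsin_coef n * sin t ^ (2 * n + 1).

Lemma is_series_arcsin_term t : - (PI / 2) < t < PI / 2 -> is_series (arcsin_term t) t.
Proof.
  intros Ht.
  assert (Hc : 0 < cos t) by (apply cos_gt_0; lra).
  assert (Hsc := sin2_cos2 t). unfold Rsqr in Hsc.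
  assert (Hw : Rabs (sin t ^ 2) < 1) by (rewrite Rabs_right; nra).
  assert (H := PSeries_correct _ _ (CV_radius_inside _ _
                 (CV_radius_inside_unit _ _ arcsin_coef_bound Hw))).
  apply is_pseries_R, (is_series_scal_l (sin t)) in H.
  rewrite arcsin_series in H by exact Ht.
  refine (is_series_ext _ _ _ _ H). intros n.
  unfold arcsin_term. change (@eq R (sin t * (arcsin_coef n * (sin t ^ 2) ^ n))
                                    (arcsin_coef n * sin t ^ (2 * n + 1))).
  rewrite <- pow_mult, pow_add. ring.
Qed.

Lemma arcsin_term_ge0 t n : 0 <= t <= PI -> 0 <= arcsin_term t n.
Proof.
  intros Ht. unfold arcsin_term. apply Rmult_le_pos; [apply Rlt_le, arcsin_coef_gt0|].
  apply pow_le, sin_ge_0; lra.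
Qed.

Lemma arcsin_term_le_coef t n : 0 <= t <= PI -> arcsin_term t n <= arcsin_coef n.
Proof.
  intros Ht. unfold arcsin_term. rewrite <- (Rmult_1_r (arcsin_coef n)) at 2.
  apply Rmult_le_compat_l; [apply Rlt_le, arcsin_coef_gt0|].
  rewrite <- (pow1 (2 * n + 1)). apply pow_incr.
  split; [apply sin_ge_0; lra | apply SIN_bound].
Qed.

Lemma arcsin_partial_le t N : 0 < t < PI / 2 -> sum_f_R0 (arcsin_term t) N <= t.
Proof.
  intros Ht. apply is_series_partial_le; [|apply is_series_arcsin_term; lra].
  intros n. apply arcsin_term_ge0. lra.
Qed.

Lemma ex_derive_arcsin_partial N x : ex_derive (fun t => sum_f_R0 (arcsin_term t) N) x.
Proof.
  induction N as [|N IH]; simpl; unfold arcsin_term; [auto_derive; auto|].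
  apply (ex_derive_plus (fun t => sum_f_R0 (arcsin_term t) N)); [exact IH|].
  auto_derive; auto.
Qed.

(* The partial sums depend on [t] only through [sin t], hence are symmetric about
   [PI / 2]: the bound [<= t] on the left transfers to the right, and continuity at
   [PI / 2] evaluates them at [sin t = 1]. *)
Lemma sum_arcsin_coef_le N : sum_f_R0 arcsin_coef N <= PI / 2.
Proof.
  assert (Hpi := PI_RGT_0).
  set (g := fun t => sum_f_R0 (arcsin_term t) N).
  replace (sum_f_R0 arcsin_coef N) with (g (PI / 2)).
  2: { apply sum_eq. intros i _. unfold arcsin_term. rewrite sin_PI2, pow1. ring. }
  change (Rbar_le (g (PI / 2)) (PI / 2)).
  apply (is_lim_le_loc g (fun _ => PI / 2) (PI / 2)).
  - exists (mkposreal (PI / 2) ltac:(lra)). intros y Hy Hne. simpl in Hy.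
    apply Rabs_lt_between' in Hy.
    destruct (Rlt_or_le y (PI / 2)) as [Hlt|Hge].
    + apply Rle_trans with y; [apply arcsin_partial_le|]; lra.
    + replace (g y) with (g (PI - y)).
      * apply Rle_trans with (PI - y); [apply arcsin_partial_le; split|]; lra.
      * apply sum_eq. intros i _. unfold arcsin_term. rewrite sin_PI_x. reflexivity.
  - apply is_lim_continuity, continuity_pt_filterlim.
    apply (ex_derive_continuous (K := R_AbsRing) (V := R_NormedModule)), ex_derive_arcsin_partial.
  - apply is_lim_const.
Qed.

Lemma ex_series_arcsin_coef : exists S, is_series arcsin_coef S.
Proof.
  destruct (growing_cv (sum_f_R0 arcsin_coef)) as [S HS].
  - intros n. simpl. assert (H := arcsin_coef_gt0 (S n)). lra.
  - exists (PI / 2). intros x [i ->]. apply sum_arcsin_coef_le.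
  - exists S. apply is_series_partial_sums, is_lim_seq_Reals, HS.
Qed.

Definition odd_inv_sq (n : nat) : R := / (2 * INR n + 1) ^ 2.

Lemma is_RInt_arcsin_partial N :
  is_RInt (fun t => sum_f_R0 (arcsin_term t) N) 0 (PI / 2) (sum_f_R0 odd_inv_sq N).
Proof.
  assert (Hterm : forall n, is_RInt (fun t => arcsin_term t n) 0 (PI / 2) (odd_inv_sq n)).
  { intros n.
    replace (odd_inv_sq n)
      with (arcsin_coef n * (4 ^ n / ((2 * INR n + 1) * centralC n))).
    - exact (is_RInt_scal _ _ _ _ _ (is_RInt_sin_odd_pow n)).
    - unfold arcsin_coef, odd_inv_sq.
      assert (0 < 4 ^ n) by (apply pow_lt; lra).
      assert (Hc := centralC_gt0 n). assert (Hn := pos_INR n). field. repeat split; lra. }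
  induction N as [|N IH]; [apply Hterm|].
  exact (is_RInt_plus _ _ _ _ _ _ IH (Hterm (S N))).
Qed.

Lemma is_RInt_id_sub k : is_RInt (fun t => t - k) 0 (PI / 2) (PI ^ 2 / 8 - k * (PI / 2)).
Proof.
  replace (PI ^ 2 / 8 - k * (PI / 2))
    with ((PI / 2) ^ 2 / 2 - k * (PI / 2) - (0 ^ 2 / 2 - k * 0)) by field.
  apply (is_RInt_derive (fun t => t ^ 2 / 2 - k * t)).
  - intros x _. auto_derive; auto. match goal with |- ?a = ?b => change (@eq R a b) end. field.
  - intros x _. apply (ex_derive_continuous (K := R_AbsRing) (V := R_NormedModule)).
    auto_derive; auto.
Qed.

(* Integrate [sum_n arcsin_term t n = t] termwise over [[0, PI/2]]; the convergence of
   [sum arcsin_coef] makes the tails uniformly small. *)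
Lemma is_series_odd_inv_sq : is_series odd_inv_sq (PI ^ 2 / 8).
Proof.
  destruct ex_series_arcsin_coef as [S HS].
  assert (Hpi := PI_RGT_0).
  apply is_series_partial_sums.
  apply (is_lim_seq_le_le (fun N => PI ^ 2 / 8 - (S - sum_f_R0 arcsin_coef N) * (PI / 2))
           _ (fun _ => PI ^ 2 / 8)).
  - intros N. split.
    + apply (is_RInt_le (fun t => t - (S - sum_f_R0 arcsin_coef N))
               (fun t => sum_f_R0 (arcsin_term t) N) 0 (PI / 2));
        [lra | apply is_RInt_id_sub | apply is_RInt_arcsin_partial|].
      intros t Ht.
      enough (t - sum_f_R0 (arcsin_term t) N <= S - sum_f_R0 arcsin_coef N) by lra.
      apply is_series_tail_le; [apply is_series_arcsin_term; lra | exact HS|].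
      intros n. split; [apply arcsin_term_ge0 | apply arcsin_term_le_coef]; lra.
    + replace (PI ^ 2 / 8) with (PI ^ 2 / 8 - 0 * (PI / 2)) by ring.
      apply (is_RInt_le (fun t => sum_f_R0 (arcsin_term t) N) (fun t => t - 0) 0 (PI / 2));
        [lra | apply is_RInt_arcsin_partial | apply is_RInt_id_sub|].
      intros t Ht. rewrite Rminus_0_r. apply arcsin_partial_le, Ht.
  - replace (Finite (PI ^ 2 / 8)) with (Finite (PI ^ 2 / 8 - (S - S) * (PI / 2)))
      by (f_equal; ring).
    apply is_lim_seq_minus'; [apply is_lim_seq_const|].
    apply is_lim_seq_scal_r with (lu := S - S).
    apply is_lim_seq_minus'; [apply is_lim_seq_const|].
    apply is_series_partial_sums, HS.
  - apply is_lim_seq_const.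
Qed.

Lemma dilog_partial_split N :
  sum_f_R0 dilog_coef (2 * N + 1) = sum_f_R0 odd_inv_sq N + sum_f_R0 dilog_coef N / 4.
Proof.
  induction N as [|N IH]; [simpl; unfold odd_inv_sq; simpl; field|].
  replace (2 * S N + 1)%nat with (S (S (2 * N + 1))) by lia.
  rewrite !tech5, IH. unfold odd_inv_sq. cbn [dilog_coef].
  rewrite !S_INR, !plus_INR, !mult_INR. simpl INR.
  assert (H := pos_INR N). field. repeat split; lra.
Qed.

Lemma dilog_partial_mono n k : sum_f_R0 dilog_coef n <= sum_f_R0 dilog_coef (n + k).
Proof.
  induction k as [|k IH]; [rewrite Nat.add_0_r; lra|].
  rewrite Nat.add_succ_r, tech5. assert (H := dilog_coef_ge0 (S (n + k))). lra.
Qed.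

(* The partial sums increase and are bounded; splitting into odd and even indices, their limit
   satisfies [Z = PI^2/8 + Z/4]. *)
Lemma is_series_dilog_coef : is_series dilog_coef (PI ^ 2 / 6).
Proof.
  assert (Hodd := is_series_odd_inv_sq). apply is_series_partial_sums in Hodd.
  assert (Hle : forall n, sum_f_R0 odd_inv_sq n <= PI ^ 2 / 8).
  { intros n. apply is_series_partial_le; [|apply is_series_partial_sums, Hodd].
    intros k. unfold odd_inv_sq. apply Rlt_le, Rinv_0_lt_compat, pow_lt.
    assert (H := pos_INR k). lra. }
  destruct (growing_cv (sum_f_R0 dilog_coef)) as [Z HZ].
  - intros n. cbn [sum_f_R0]. assert (H := dilog_coef_ge0 (S n)). lra.
  - exists (PI ^ 2 / 6). intros x [n ->].
    assert (H1 := dilog_partial_mono n (S n)).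
    replace (n + S n)%nat with (2 * n + 1)%nat in H1 by lia.
    rewrite dilog_partial_split in H1. assert (H2 := Hle n). lra.
  - apply is_lim_seq_Reals in HZ.
    assert (Hsub : is_lim_seq (fun N => sum_f_R0 dilog_coef (2 * N + 1)) Z).
    { apply (is_lim_seq_subseq (sum_f_R0 dilog_coef)); [|exact HZ].
      apply eventually_subseq. intros n. lia. }
    assert (Hsplit : is_lim_seq (fun N => sum_f_R0 dilog_coef (2 * N + 1)) (PI ^ 2 / 8 + Z / 4)).
    { apply (is_lim_seq_ext (fun N => sum_f_R0 odd_inv_sq N + sum_f_R0 dilog_coef N / 4)).
      - intros N. symmetry. apply dilog_partial_split.
      - apply is_lim_seq_plus'; [exact Hodd|]. apply is_lim_seq_scal_r with (lu := Z), HZ. }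
    assert (E := is_lim_seq_unique _ _ Hsub). rewrite (is_lim_seq_unique _ _ Hsplit) in E.
    injection E as E. apply is_series_partial_sums.
    replace (PI ^ 2 / 6) with Z by lra. exact HZ.
Qed.

Theorem mainTheorem9 :
  is_series (fun m : nat => term9 (S m)) (PI ^ 2 / 6 - (ln 2) ^ 2).
Proof.
  replace (PI ^ 2 / 6 - ln 2 ^ 2) with (2 * Li2 (1/2)).
  - exact is_series_term9_Li2.
  - rewrite <- (Li2_half _ is_series_dilog_coef). ring.
Qed.
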